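(* Let $(\mathcal{P},+)$ be a reparametrization category. For all $\ell',\ell''\in\mathrm{Obj}(\mathcal{P})$ there is an isomorphism of $\mathcal{P}$-spaces, natural with respect to $\ell'$ and $\ell''$, \[\int^{\ell}\mathcal{P}(-,\ell'+\ell)\times\mathcal{P}(\ell,\ell'')\cong\mathcal{P}(-,\ell'+\ell''),\] which takes the equivalence class of $(\psi,\phi)\in\mathcal{P}(-,\ell'+\ell)\times\mathcal{P}(\ell,\ell'')$ to $(\mathrm{id}_{\ell'}\otimes\phi)\psi$.
   Context: All enriched categories are enriched over the cartesian closed category $\mathbf{Top}$ of ($\Delta$-generated) topological spaces. A reparametrization category is a small enriched semimonoidal category $(\mathcal{P},\otimes)$ (enriched meaning the hom-sets are spaces, composition is continuous and $\mathcal{P}(a,b)\times\mathcal{P}(c,d)\to\mathcal{P}(a\otimes c,b\otimes d)$ is continuous) such that: (1) the semimonoidal structure is strict; (2) all spaces $\mathcal{P}(\ell,\ell')$ are contractible; (3) for every map $\phi:\ell\to\ell'$ and all objects $\ell'_1,\ell'_2$ with $\ell'_1\otimes\ell'_2=\ell'$, there exist maps $\phi_1:\ell_1\to\ell'_1$, $\phi_2:\ell_2\to\ell'_2$ with $\phi=\phi_1\otimes\phi_2$. One writes $\ell+\ell':=\ell\otimes\ell'$ on objects. A $\mathcal{P}$-space is an enriched functor $\mathcal{P}^{op}\to\mathbf{Top}$; the coend is taken in the category of $\mathcal{P}$-spaces. *)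

(* Topological spaces are MathComp-Analysis
   [topologicalType]s; the ambient category Top is that of Delta-generated
   spaces, encoded via the path-generated ("dopen") topology. *)
From HB Require Import structures.
From mathcomp Require Import all_boot all_order all_algebra.
From mathcomp Require Import all_classical all_reals topology.
From mathcomp Require Import Rstruct Rstruct_topology.
From Stdlib Require Import Relation_Operators Rdefinitions.
Set Implicit Arguments.
Unset Strict Implicit.
Unset Printing Implicit Defensive.
Import Order.TTheory GRing.Theory Num.Theory.
Local Open Scope classical_set_scope.
Local Open Scope ring_scope.

Definition unitI : set Rdefinitions.R := `[0%R, 1%R].

Definition is_path (T : topologicalType) (g : R -> T) : Prop :=
  {within unitI, continuous g}.

(* Delta-open sets: sets whose preimage under every path is (relatively)
   open in [0,1].  These are the open sets of the Delta-ification of T. *)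
Definition dopen (T : topologicalType) (A : set T) : Prop :=
  forall g : R -> T, is_path g ->
    exists V : set R, open V /\ (g @^-1` A) `&` unitI = V `&` unitI.

Definition delta_generated (T : topologicalType) : Prop :=
  forall A : set T, dopen A -> open A.

(* continuity out of the Delta-ification of X (e.g. of a product in Top,
   which gives the product in Delta-generated spaces) *)
Definition dcontinuous (X Y : topologicalType) (f : X -> Y) : Prop :=
  forall g : R -> X, is_path g -> {within unitI, continuous (f \o g)}.

(* contractibility in Delta-generated spaces: a Delta-continuous homotopy
   X x [0,1] -> X from the identity to a constant map *)
Definition contractible (X : topologicalType) : Prop :=
  exists (x0 : X) (H : X -> R -> X),
    (forall x, H x 0%R = x) /\ (forall x, H x 1%R = x0) /\
    (forall (g : R -> X) (d : R -> R), is_path g -> is_path d ->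
        (forall t, unitI t -> unitI (d t)) ->
        {within unitI, continuous (fun t => H (g t) (d t))}).

Definition castH (O : Type) (H : O -> O -> Type) (a a' b b' : O)
  (e1 : a = a') (e2 : b = b') (f : H a b) : H a' b' :=
  match e1 in _ = x, e2 in _ = y return H x y with
  | erefl, erefl => f end.

(* A reparametrization category: a small Top-enriched strict semimonoidal
   category satisfying (2) contractible homs and (3) the splitting property. *)
Record reparamCat := ReparamCat {
  Obj : Type;
  hom : Obj -> Obj -> topologicalType;
  hcomp : forall a b c : Obj, hom b c -> hom a b -> hom a c;
  idm : forall a : Obj, hom a a;
  tobj : Obj -> Obj -> Obj;
  tens : forall a b c d : Obj, hom a b -> hom c d -> hom (tobj a c) (tobj b d);
  (* hom objects live in Top = Delta-generated spaces *)
  hom_dgen : forall a b, delta_generated (hom a b);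
  compA : forall a b c d (f : hom a b) (g : hom b c) (h : hom c d),
      hcomp h (hcomp g f) = hcomp (hcomp h g) f;
  hcomp1m : forall a b (f : hom a b), hcomp (idm b) f = f;
  compm1 : forall a b (f : hom a b), hcomp f (idm a) = f;
  (* enrichment: composition and tensor are continuous out of the product
     in Delta-generated spaces *)
  hcomp_cont : forall a b c,
      dcontinuous (fun p : (hom b c * hom a b)%type => hcomp p.1 p.2);
  tens_cont : forall a b c d,
      dcontinuous (fun p : (hom a b * hom c d)%type => tens p.1 p.2);
  tens_id : forall a c, tens (idm a) (idm c) = idm (tobj a c);
  tens_comp : forall a b c a' b' c' (f : hom a b) (g : hom b c)
      (f' : hom a' b') (g' : hom b' c'),
      tens (hcomp g f) (hcomp g' f') = hcomp (tens g g') (tens f f');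
  tobjA : forall a b c, tobj (tobj a b) c = tobj a (tobj b c);
  tensA : forall a b c d e f (x : hom a b) (y : hom c d) (z : hom e f),
      tens (tens x y) z =
      @castH _ (fun u v => hom u v) _ _ _ _ (esym (tobjA a c e)) (esym (tobjA b d f))
            (tens x (tens y z));
  hom_contr : forall a b, contractible (hom a b);
  hom_split : forall (l l1' l2' : Obj) (phi : hom l (tobj l1' l2')),
      exists (l1 l2 : Obj) (e : tobj l1 l2 = l)
             (phi1 : hom l1 l1') (phi2 : hom l2 l2'),
        phi = @castH _ (fun u v => hom u v) _ _ _ _ e erefl (tens phi1 phi2)
}.

Section Coend.
Variable P : reparamCat.
Local Notation O := (Obj P).
Local Notation "a + b" := (tobj a b) : type_scope.

(* the summands of the coend  int^l P(k, l' + l) x P(l, l'')  at stage k *)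
Definition coend_sum (l' l'' k : O) : Type :=
  {l : O & (@hom P k (tobj l' l) * @hom P l l'')%type}.

(* generating relation of the coend (coequalizer) :
   (psi, phi o theta) ~ ((id_l' (x) theta) o psi, phi) *)
Definition coend_step (l' l'' k : O) (x y : coend_sum l' l'' k) : Prop :=
  exists (a b : O) (theta : @hom P a b) (psi : @hom P k (tobj l' a))
         (phi : @hom P b l''),
    x = existT _ a (psi, hcomp phi theta) /\
    y = existT _ b (hcomp (tens (idm l') theta) psi, phi).

Definition coend_rel (l' l'' k : O) : coend_sum l' l'' k -> coend_sum l' l'' k -> Prop :=
  clos_refl_sym_trans _ (@coend_step l' l'' k).

Definition cmp_map (l' l'' k l : O)
  (p : (@hom P k (tobj l' l) * @hom P l l'')%type) : @hom P k (tobj l' l'') :=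
  hcomp (tens (idm l') p.2) p.1.

Definition cmp_sum (l' l'' k : O) (x : coend_sum l' l'' k) : @hom P k (tobj l' l'') :=
  cmp_map (projT2 x).

End Coend.

(* Every class [(psi, phi)] of the coend is related, by the coend relation with
   theta := phi, to the normal form [((id (x) phi) psi, id)].  Hence the
   comparison map identifies exactly the related pairs, and f |-> [(f, id)] is a
   section of it.  The comparison map is continuous on every summand; conversely
   a set whose preimage in the summand at l'' is Delta-open is Delta-open itself,
   by pulling paths back along the section, hence open since hom spaces are
   Delta-generated. *)
From Pilot Require Import Defs.
From mathcomp Require Import all_boot all_classical topology.
From mathcomp Require Import Rstruct Rstruct_topology.
From Stdlib Require Import Relation_Operators.
Local Open Scope classical_set_scope.

Section Paths.
Context {X Y : topologicalType}.

Lemma is_path_pair {g1 : Rdefinitions.R -> X} {g2 : Rdefinitions.R -> Y} :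
  is_path g1 -> is_path g2 -> is_path (fun t => (g1 t, g2 t)).
Proof. by move=> h1 h2 x; apply: cvg_pair; [exact: h1|exact: h2]. Qed.

Lemma is_path_fst {g : Rdefinitions.R -> X * Y} :
  is_path g -> is_path (fun t => (g t).1).
Proof. by move=> h x; apply: continuous_comp; [exact: h|exact: cvg_fst]. Qed.

Lemma is_path_snd {g : Rdefinitions.R -> X * Y} :
  is_path g -> is_path (fun t => (g t).2).
Proof. by move=> h x; apply: continuous_comp; [exact: h|exact: cvg_snd]. Qed.

Lemma is_path_cst (x : X) : is_path (fun _ : Rdefinitions.R => x).
Proof. exact: cst_continuous. Qed.

Lemma dopen_preimage (f : X -> Y) (U : set Y) :
  dcontinuous f -> open U -> dopen (f @^-1` U).
Proof.
move=> fc oU g hg.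
have : open (from_subspace unitI (f \o g) @^-1` U).
  by move/continuousP: (fc g hg); apply.
by case/open_subspaceP => V oV e; exists V.
Qed.

Lemma dopen_of_preimage_section (f : X -> Y) (s : Y -> X) (U : set Y) :
  (forall g, is_path g -> is_path (s \o g)) -> cancel s f ->
  dopen (f @^-1` U) -> dopen U.
Proof.
move=> sP sK fU g hg; have [V [oV e]] := fU _ (sP g hg).
exists V; split => //; rewrite -e; congr (_ `&` _).
by apply/funext => t /=; rewrite sK.
Qed.

End Paths.

Section ReparamCat.
Context {P : reparamCat}.
Implicit Types a b c : Obj P.

Lemma tens_idm_comp a b c l (theta : hom a b) (phi : hom b c) :
  tens (idm l) (hcomp phi theta) = hcomp (tens (idm l) phi) (tens (idm l) theta).
Proof. by rewrite -tens_comp hcomp1m. Qed.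

Lemma tens_idm_interchange a a' b b' (alpha : hom a a') (phi : hom b b') :
  hcomp (tens alpha (idm b')) (tens (idm a) phi)
  = hcomp (tens (idm a') phi) (tens alpha (idm b)).
Proof. by rewrite -!tens_comp !hcomp1m !compm1. Qed.

Context {l' l'' : Obj P}.

Lemma cmp_map_precomp k0 k l (chi : hom k0 k) (psi : hom k (tobj l' l))
    (phi : hom l l'') :
  cmp_map (hcomp psi chi, phi) = hcomp (cmp_map (psi, phi)) chi.
Proof. exact: Defs.compA. Qed.

Lemma cmp_map_postcomp m'' k l (beta : hom l'' m'') (psi : hom k (tobj l' l))
    (phi : hom l l'') :
  cmp_map (psi, hcomp beta phi) = hcomp (tens (idm l') beta) (cmp_map (psi, phi)).
Proof. by rewrite /cmp_map /= tens_idm_comp Defs.compA. Qed.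

Lemma cmp_map_tens_left m' k l (alpha : hom l' m') (psi : hom k (tobj l' l))
    (phi : hom l l'') :
  cmp_map (hcomp (tens alpha (idm l)) psi, phi)
  = hcomp (tens alpha (idm l'')) (cmp_map (psi, phi)).
Proof. by rewrite /cmp_map /= !Defs.compA tens_idm_interchange. Qed.

Lemma cmp_map_dcontinuous k l : dcontinuous (@cmp_map P l' l'' k l).
Proof.
move=> g hg.
have hphi := tens_cont (is_path_pair (is_path_cst (idm l')) (is_path_snd hg)).
exact: hcomp_cont (is_path_pair hphi (is_path_fst hg)).
Qed.

Context {k : Obj P}.

Definition coend_unit (f : hom k (tobj l' l'')) : coend_sum l' l'' k :=
  existT _ l'' (f, idm l'').

Lemma cmp_map_unit (f : hom k (tobj l' l'')) : cmp_map (f, idm l'') = f.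
Proof. by rewrite /cmp_map /= tens_id hcomp1m. Qed.

Lemma cmp_sum_unit (f : hom k (tobj l' l'')) : cmp_sum (coend_unit f) = f.
Proof. exact: cmp_map_unit. Qed.

Lemma coend_step_cmp (x y : coend_sum l' l'' k) :
  coend_step x y -> cmp_sum x = cmp_sum y.
Proof.
case=> [a [b [theta [psi [phi [-> ->]]]]]].
by rewrite /cmp_sum /cmp_map /= tens_idm_comp Defs.compA.
Qed.

Lemma coend_rel_cmp (x y : coend_sum l' l'' k) :
  coend_rel x y -> cmp_sum x = cmp_sum y.
Proof. by elim=> [a b /coend_step_cmp|//|a b _ ->|a b c _ -> _ ->]. Qed.

Lemma coend_rel_unit (x : coend_sum l' l'' k) :
  coend_rel x (coend_unit (cmp_sum x)).
Proof.
apply: rst_step; case: x => l [psi phi].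
by exists l, l'', phi, psi, (idm l''); rewrite hcomp1m.
Qed.

Lemma cmp_sum_eq (x y : coend_sum l' l'' k) :
  cmp_sum x = cmp_sum y <-> coend_rel x y.
Proof.
split=> [e|/coend_rel_cmp //].
apply: rst_trans (coend_rel_unit x) _; rewrite e.
exact/rst_sym/coend_rel_unit.
Qed.

Lemma open_cmp_preimage (U : set (hom k (tobj l' l''))) :
  open U <-> (forall l, dopen (@cmp_map P l' l'' k l @^-1` U)).
Proof.
split=> [oU l|dU]; first exact: dopen_preimage (cmp_map_dcontinuous k l) oU.
apply: hom_dgen.
apply: (@dopen_of_preimage_section _ _ _ (fun f => (f, idm l'')) _ _
  cmp_map_unit (dU l'')) => g hg.
exact: is_path_pair hg (is_path_cst _).
Qed.

End ReparamCat.

Theorem lemma3p2 (P : reparamCat) (l' l'' : Obj P) :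
  (* for every stage k, the map [psi,phi] |-> (id (x) phi) psi from the coend
     to P(k, l'+l'') is a well-defined bijection from the quotient ... *)
  (forall k : Obj P,
     (forall x y : coend_sum l' l'' k,
        cmp_sum x = cmp_sum y <-> coend_rel x y) /\
     (forall f : @hom P k (tobj l' l''), exists x : coend_sum l' l'' k,
        cmp_sum x = f) /\
     (* ... and a homeomorphism for the quotient (coend) topology *)
     (forall U : set (@hom P k (tobj l' l'')),
        open U <->
        (forall l : Obj P, dopen (@cmp_map P l' l'' k l @^-1` U)))) /\
  (* natural in the P-space variable k *)
  (forall (k0 k l : Obj P) (chi : @hom P k0 k)
          (psi : @hom P k (tobj l' l)) (phi : @hom P l l''),
     cmp_map (hcomp psi chi, phi) = hcomp (cmp_map (psi, phi)) chi) /\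
  (* natural in l'' *)
  (forall (m'' k l : Obj P) (beta : @hom P l'' m'')
          (psi : @hom P k (tobj l' l)) (phi : @hom P l l''),
     cmp_map (psi, hcomp beta phi) = hcomp (tens (idm l') beta) (cmp_map (psi, phi))) /\
  (* natural in l' *)
  (forall (m' k l : Obj P) (alpha : @hom P l' m')
          (psi : @hom P k (tobj l' l)) (phi : @hom P l l''),
     cmp_map (hcomp (tens alpha (idm l)) psi, phi)
     = hcomp (tens alpha (idm l'')) (cmp_map (psi, phi))).
Proof.
split; last first.
  split; [exact: cmp_map_precomp|split; [exact: cmp_map_postcomp|exact: cmp_map_tens_left]].
move=> k; split; first exact: cmp_sum_eq.
split; last exact: open_cmp_preimage.
by move=> f; exists (coend_unit f); apply: cmp_sum_unit.
Qed.
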